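(* There is a universal constant $c<\infty$ with the following property: if $f\in C^\infty(H^2)$ is a positive solution of $x^{-3}(x^3f_x)_x+f_{yy}=0$ (equivalently $f_{xx}+f_{yy}+3x^{-1}f_x=0$) on $H^2$, then $$x\,|\nabla\log f|(x,y)<c\quad\text{for all }(x,y)\in H^2,$$ where $\nabla$ is the Euclidean gradient in $(x,y)$.
   Context: $H^2=\{(x,y)\in\mathbb{R}^2: x>0\}$ is the open right half-plane. *)

From Stdlib Require Import Reals.
Open Scope R_scope.

Definition H2 (x y : R) : Prop := 0 < x.

Definition partial_x (f : R -> R -> R) (x y l : R) : Prop :=
  derivable_pt_lim (fun t => f t y) x l.
Definition partial_y (f : R -> R -> R) (x y l : R) : Prop :=
  derivable_pt_lim (fun t => f x t) y l.

Definition continuous2_at (f : R -> R -> R) (x y : R) : Prop :=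
  forall eps, 0 < eps -> exists delta, 0 < delta /\
    forall x' y', Rabs (x' - x) < delta -> Rabs (y' - y) < delta ->
      Rabs (f x' y' - f x y) < eps.

(* f is C^infinity on the open set U: f belongs to a family S of functions,
   each jointly continuous on U and having partial derivatives on U which
   (as functions) again belong to S.  Hence all partial derivatives of all
   orders exist and are continuous on U. *)
Definition smooth_on (U : R -> R -> Prop) (f : R -> R -> R) : Prop :=
  exists S : (R -> R -> R) -> Prop, S f /\
    forall g, S g ->
      (forall x y, U x y -> continuous2_at g x y) /\
      exists gx gy : R -> R -> R, S gx /\ S gy /\
        forall x y, U x y -> partial_x g x y (gx x y) /\ partial_y g x y (gy x y).

(* Bernstein's maximum-principle argument.  Write Q = |∇ log f|^2 and L = Δ + (3/x)∂_x, so
   that L f = 0.  Fix (x0, y0), put r = x0 / 2 and let φ = ψ((x - x0)/r) ψ((y - y0)/r) with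
   ψ(s) = (1 - s^2)^2, a cutoff supported in a square inside the half-plane.  The function φQ
   attains its maximum on that square; when it is positive the maximum is interior, so
   ∇(φQ) = 0 and the second derivatives of φQ along both coordinate lines are nonpositive.
   A Bochner identity for LQ, in which the equation (log f)_xx + (log f)_yy = -Q - (3/x)(log f)_x
   lets the Hessian of log f dominate Q^2, turns these conditions into a quadratic inequality
   for G = r^2 φQ forcing G <= 2000.  As φ(x0, y0) = 1, x0^2 Q(x0, y0) <= 8000 < 90^2. *)

From Stdlib Require Import Reals Lra Psatz ClassicalEpsilon.
From Coquelicot Require Import Coquelicot.
Open Scope R_scope.

Lemma derivable_pt_lim_eq_val f x l l' :
  derivable_pt_lim f x l -> l = l' -> derivable_pt_lim f x l'.
Proof. now intros H <-. Qed.

Lemma derivable_pt_lim_ext_loc f g x l :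
  (exists d, 0 < d /\ forall t, Rabs (t - x) < d -> f t = g t) ->
  derivable_pt_lim f x l -> derivable_pt_lim g x l.
Proof.
  intros [d [Hd Hfg]] H. apply is_derive_Reals. apply is_derive_Reals in H.
  apply (is_derive_ext_loc f g); [exists (mkposreal d Hd); exact Hfg | exact H].
Qed.

Lemma derivable_pt_lim_ext f g x l :
  (forall t, f t = g t) -> derivable_pt_lim f x l -> derivable_pt_lim g x l.
Proof.
  intros E. apply derivable_pt_lim_ext_loc. exists 1. split; [lra | intros; apply E].
Qed.

Lemma derivable_pt_lim_inv_fun f x l : derivable_pt_lim f x l -> f x <> 0 ->
  derivable_pt_lim (fun t => / f t) x (- l / (f x * f x)).
Proof.
  intros Hf Hn.
  pose proof (derivable_pt_lim_div (fun _ => 1) f x 0 l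
    (derivable_pt_lim_const 1 x) Hf Hn) as H.
  eapply derivable_pt_lim_eq_val.
  - eapply derivable_pt_lim_ext; [| exact H]. intros t. unfold div_fct, Rdiv. ring.
  - unfold Rsqr. field. exact Hn.
Qed.

Lemma derivable_pt_lim_local_max f c d l : 0 < d -> derivable_pt_lim f c l ->
  (forall t, Rabs (t - c) < d -> f t <= f c) -> l = 0.
Proof.
  intros Hd Hl Hmax. change l with (derive_pt f c (exist _ l Hl)).
  apply (deriv_maximum f (c - d) (c + d)); try lra.
  intros t H1 H2. apply Hmax, Rabs_def1; lra.
Qed.

Lemma derivable_pt_lim_local_max_2 f f' c d l : 0 < d ->
  (forall t, Rabs (t - c) < d -> derivable_pt_lim f t (f' t)) ->
  derivable_pt_lim f' c l ->
  (forall t, Rabs (t - c) < d -> f t <= f c) -> l <= 0.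
Proof.
  intros Hd Hf Hl Hmax.
  assert (Hc0 : Rabs (c - c) < d) by (rewrite Rminus_diag, Rabs_R0; exact Hd).
  assert (Hcrit : f' c = 0) by exact (derivable_pt_lim_local_max f c d _ Hd (Hf c Hc0) Hmax).
  destruct (Rle_or_lt l 0) as [Hle | Hgt]; [exact Hle | exfalso].
  destruct (Hl l Hgt) as [del Hdel].
  set (h := Rmin del d / 2).
  pose proof (Rmin_pos del d (cond_pos del) Hd).
  assert (Hh : 0 < h < Rmin del d) by (unfold h; lra).
  pose proof (Rmin_l del d). pose proof (Rmin_r del d).
  destruct (MVT_cor2 f f' c (c + h)) as [xi [Hmvt Hxi]]; [lra | |].
  { intros t Ht. apply Hf, Rabs_def1; lra. }
  (* [f (c + h) <= f c] forces [f' xi <= 0], a nonpositive difference quotient of [f'] at [c]. *)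
  assert (Hfh : f (c + h) <= f c) by (apply Hmax, Rabs_def1; lra).
  assert (Hxi' : f' xi <= 0) by nra.
  specialize (Hdel (xi - c) ltac:(lra) ltac:(apply Rabs_def1; lra)).
  replace (c + (xi - c)) with xi in Hdel by ring.
  rewrite Hcrit, Rminus_0_r in Hdel.
  assert (Hq : f' xi / (xi - c) <= 0).
  { unfold Rdiv. apply Rmult_le_0_r; [exact Hxi' | apply Rlt_le, Rinv_0_lt_compat; lra]. }
  apply Rabs_def2 in Hdel. lra.
Qed.

Record jet := Jet { jet0 : R; jet1 : R; jet2 : R }.

Definition jet_const c := Jet c 0 0.
Definition jet_add a b := Jet (jet0 a + jet0 b) (jet1 a + jet1 b) (jet2 a + jet2 b).
Definition jet_mul a b := Jet (jet0 a * jet0 b) (jet1 a * jet0 b + jet0 a * jet1 b)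
  (jet2 a * jet0 b + 2 * (jet1 a * jet1 b) + jet0 a * jet2 b).
Definition jet_inv a := Jet (/ jet0 a) (- jet1 a / (jet0 a * jet0 a))
  ((2 * jet1 a ^ 2 - jet0 a * jet2 a) / jet0 a ^ 3).

Definition has_jet (P : R -> Prop) (J : R -> jet) : Prop :=
  forall t, P t -> derivable_pt_lim (fun s => jet0 (J s)) t (jet1 (J t)) /\
                   derivable_pt_lim (fun s => jet1 (J s)) t (jet2 (J t)).

Section JetCalculus.
Variable P : R -> Prop.

Lemma has_jet_const c : has_jet P (fun _ => jet_const c).
Proof. intros t _. split; apply derivable_pt_lim_const. Qed.

Lemma has_jet_id : has_jet P (fun t => Jet t 1 0).
Proof. intros t _. split; [apply derivable_pt_lim_id | apply derivable_pt_lim_const]. Qed.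

Lemma has_jet_add a b : has_jet P a -> has_jet P b -> has_jet P (fun t => jet_add (a t) (b t)).
Proof.
  intros Ha Hb t Ht. destruct (Ha t Ht) as [A1 A2], (Hb t Ht) as [B1 B2].
  split; [exact (derivable_pt_lim_plus _ _ _ _ _ A1 B1)
        | exact (derivable_pt_lim_plus _ _ _ _ _ A2 B2)].
Qed.

Lemma has_jet_mul a b : has_jet P a -> has_jet P b -> has_jet P (fun t => jet_mul (a t) (b t)).
Proof.
  intros Ha Hb t Ht. destruct (Ha t Ht) as [A1 A2], (Hb t Ht) as [B1 B2]. split.
  - exact (derivable_pt_lim_mult _ _ _ _ _ A1 B1).
  - eapply derivable_pt_lim_eq_val.
    + exact (derivable_pt_lim_plus _ _ _ _ _
        (derivable_pt_lim_mult _ _ _ _ _ A2 B1) (derivable_pt_lim_mult _ _ _ _ _ A1 B2)).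
    + simpl. ring.
Qed.

Lemma has_jet_inv a : has_jet P a -> (forall t, P t -> jet0 (a t) <> 0) ->
  has_jet P (fun t => jet_inv (a t)).
Proof.
  intros Ha Hn t Ht. destruct (Ha t Ht) as [A1 A2]. specialize (Hn t Ht). split.
  - exact (derivable_pt_lim_inv_fun _ _ _ A1 Hn).
  - assert (Hsq : jet0 (a t) * jet0 (a t) <> 0) by (apply Rmult_integral_contrapositive; auto).
    pose proof (derivable_pt_lim_div (fun s => - jet1 (a s)) (fun s => jet0 (a s) * jet0 (a s)) t
      _ _ (derivable_pt_lim_opp _ _ _ A2) (derivable_pt_lim_mult _ _ _ _ _ A1 A1) Hsq) as H.
    eapply derivable_pt_lim_eq_val; [exact H |]. simpl. unfold Rsqr. field. exact Hn.
Qed.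

Lemma has_jet_ext a b : has_jet P a -> (forall t, jet0 (a t) = jet0 (b t)) ->
  (forall t, jet1 (a t) = jet1 (b t)) -> (forall t, P t -> jet2 (a t) = jet2 (b t)) ->
  has_jet P b.
Proof.
  intros Ha E0 E1 E2 t Ht. destruct (Ha t Ht) as [A1 A2]. split.
  - rewrite <- E1. exact (derivable_pt_lim_ext _ _ _ _ E0 A1).
  - rewrite <- E2 by exact Ht. exact (derivable_pt_lim_ext _ _ _ _ E1 A2).
Qed.

End JetCalculus.

Lemma jet_local_max P J c d : 0 < d -> has_jet P J ->
  (forall t, Rabs (t - c) < d -> P t /\ jet0 (J t) <= jet0 (J c)) ->
  jet1 (J c) = 0 /\ jet2 (J c) <= 0.
Proof.
  intros Hd HJ Hmax.
  assert (Hc : Rabs (c - c) < d) by (rewrite Rminus_diag, Rabs_R0; exact Hd).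
  destruct (HJ c (proj1 (Hmax c Hc))) as [J1 J2]. split.
  - exact (derivable_pt_lim_local_max _ c d _ Hd J1 (fun t Ht => proj2 (Hmax t Ht))).
  - apply (derivable_pt_lim_local_max_2 (fun s => jet0 (J s)) (fun s => jet1 (J s)) c d);
      [exact Hd | | exact J2 | exact (fun t Ht => proj2 (Hmax t Ht))].
    intros t Ht. exact (proj1 (HJ t (proj1 (Hmax t Ht)))).
Qed.

(* [(A^2 + B^2) / F^2], i.e. |∇ log f|^2 for F = f, A = f_x, B = f_y, written with inverses so
   that [grad_log_sq_jet] computes its jets by the Leibniz rules. *)
Definition grad_log_sq (F A B : R) : R := (A * A + B * B) * (/ F * / F).

Definition grad_log_sq_jet (F A B : jet) : jet :=
  jet_mul (jet_add (jet_mul A A) (jet_mul B B)) (jet_mul (jet_inv F) (jet_inv F)).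

Lemma grad_log_sq_nonneg F A B : 0 <= grad_log_sq F A B.
Proof. unfold grad_log_sq. apply Rmult_le_pos; nra. Qed.

Lemma has_jet_grad_log_sq P F A B : has_jet P F -> has_jet P A -> has_jet P B ->
  (forall t, P t -> jet0 (F t) <> 0) ->
  has_jet P (fun t => grad_log_sq_jet (F t) (A t) (B t)).
Proof.
  intros HF HA HB Hn. unfold grad_log_sq_jet.
  apply has_jet_mul; [apply has_jet_add | apply has_jet_mul];
    try (apply has_jet_mul; assumption); apply has_jet_inv; assumption.
Qed.

Definition cutoff (s : R) : R := (1 - s^2)^2.

Definition cutoff_jet (c r t : R) : jet :=
  let s := (t - c) / r in Jet (cutoff s) (-4 * s * (1 - s^2) / r) ((12 * s^2 - 4) / r^2).

Lemma has_jet_cutoff P c r : r <> 0 -> has_jet P (cutoff_jet c r).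
Proof.
  intros Hr.
  set (L := fun t => jet_mul (jet_add (Jet t 1 0) (jet_const (- c))) (jet_const (/ r))).
  set (M := fun t => jet_add (jet_const 1) (jet_mul (jet_const (-1)) (jet_mul (L t) (L t)))).
  assert (HL : has_jet P L)
    by (apply has_jet_mul; [apply has_jet_add; [apply has_jet_id | apply has_jet_const]
                           | apply has_jet_const]).
  assert (HM : has_jet P M)
    by (apply has_jet_add; [apply has_jet_const | apply has_jet_mul;
          [apply has_jet_const | apply has_jet_mul; exact HL]]).
  apply (has_jet_ext P (fun t => jet_mul (M t) (M t))); [apply has_jet_mul; exact HM | ..];
    intros; unfold M, L, cutoff_jet, cutoff; simpl; field; exact Hr.
Qed.

Definition weight_bounds (r : R) (W : jet) : Prop :=
  jet0 W <= 1 /\ r^2 * jet1 W ^ 2 <= 16 * jet0 W /\ -4 <= r^2 * jet2 W.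

Lemma cutoff_range s : s^2 <= 1 -> 0 <= cutoff s <= 1.
Proof. intros H. unfold cutoff. split; nra. Qed.

Lemma weight_bounds_cutoff c r t k : r <> 0 -> ((t - c) / r)^2 <= 1 -> 0 <= k <= 1 ->
  weight_bounds r (jet_mul (cutoff_jet c r t) (jet_const k)).
Proof.
  intros Hr Hs Hk. unfold weight_bounds, cutoff_jet. cbn [jet0 jet1 jet2 jet_mul jet_const].
  set (s := (t - c) / r) in *. pose proof (cutoff_range s Hs) as Hc. unfold cutoff in *.
  assert (0 <= s^2) by nra.
  repeat split.
  - nra.
  - replace (r^2 * ((-4 * s * (1 - s^2) / r) * k + (1 - s^2)^2 * 0)^2)
      with (16 * s^2 * (1 - s^2)^2 * k^2) by (field; exact Hr).
    assert (s^2 * k^2 <= k) by nra.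
    assert (0 <= (1 - s^2)^2) by nra.
    replace (16 * s^2 * (1 - s^2)^2 * k^2) with (16 * (1 - s^2)^2 * (s^2 * k^2)) by ring.
    replace (16 * ((1 - s^2)^2 * k)) with (16 * (1 - s^2)^2 * k) by ring.
    apply Rmult_le_compat_l; nra.
  - replace (r^2 * ((12 * s^2 - 4) / r^2 * k + 2 * (-4 * s * (1 - s^2) / r * 0) + (1 - s^2)^2 * 0))
      with ((12 * s^2 - 4) * k) by (field; exact Hr).
    nra.
Qed.

Lemma cutoff_arg_bounds c r t : 0 < r -> c - r <= t <= c + r -> ((t - c) / r)^2 <= 1.
Proof.
  intros Hr Ht. assert (E : (t - c) / r * r = t - c) by (field; lra).
  assert (-1 <= (t - c) / r <= 1) by (split; nra). nra.
Qed.

Lemma cutoff_interior c r t : 0 < r -> c - r <= t <= c + r -> 0 < cutoff ((t - c) / r) ->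
  Rabs (t - c) < r.
Proof.
  intros Hr Ht Hc. pose proof (cutoff_arg_bounds c r t Hr Ht) as Hs.
  assert (Hs' : ((t - c) / r)^2 < 1).
  { destruct (Rle_lt_or_eq_dec _ _ Hs) as [Hlt | Heq]; [exact Hlt |].
    unfold cutoff in Hc. rewrite Heq in Hc. lra. }
  assert (E : (t - c) / r * r = t - c) by (field; lra).
  assert (-1 < (t - c) / r < 1) by (split; nra).
  apply Rabs_def1; nra.
Qed.

Lemma interior_neighbourhood c r t : Rabs (t - c) < r ->
  forall t', Rabs (t' - t) < r - Rabs (t - c) -> c - r <= t' <= c + r.
Proof.
  intros Ht t' Ht'. apply Rabs_def2 in Ht'.
  pose proof (Rle_abs (t - c)). pose proof (Rabs_maj2 (t - c)). lra.
Qed.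

(* [ph] and [Q] are φ and |∇ log f|^2 at an interior maximum of φQ (suffixes denote partial
   derivatives), [p, q] is ∇ log f and [px, qy] its pure second derivatives; the hypotheses are
   the Bochner inequality for Δ + k ∂_x, ∇(φQ) = 0 and Δ(φQ) <= 0. *)
Lemma weighted_max_inequality k ph phx phy phxx phyy p q px qy Q Qx Qy Qxx Qyy :
  0 < ph -> Q = p^2 + q^2 ->
  Qxx + Qyy + k * Qx >= 2 * (px^2 + qy^2) - 2 * (p * Qx + q * Qy) ->
  phx * Q + ph * Qx = 0 -> phy * Q + ph * Qy = 0 ->
  (phxx * Q + 2 * phx * Qx + ph * Qxx) + (phyy * Q + 2 * phy * Qy + ph * Qyy) <= 0 ->
  ph^2 * (px + qy)^2 + ph * Q * ((2 * p + k) * phx + 2 * q * phy) + ph * Q * (phxx + phyy)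
    <= 2 * Q * (phx^2 + phy^2).
Proof.
  intros Hph HQ HL Hgx Hgy Hlap.
  assert (Ex : ph * Qx = - phx * Q) by lra.
  assert (Ey : ph * Qy = - phy * Q) by lra.
  assert (Hsum : (px + qy)^2 <= 2 * (px^2 + qy^2)) by (pose proof (pow2_ge_0 (px - qy)); nra).
  assert (S1 : ph^2 * (Qxx + Qyy) >= ph^2 * (px + qy)^2 + 2 * ph * Q * (p * phx + q * phy)
                 + k * ph * phx * Q).
  { assert (ph^2 * (Qxx + Qyy + k * Qx) >= ph^2 * (2 * (px^2 + qy^2) - 2 * (p * Qx + q * Qy))).
    { apply Rle_ge, Rmult_le_compat_l; [nra | lra]. }
    assert (ph^2 * (px + qy)^2 <= ph^2 * (2 * (px^2 + qy^2))) by (apply Rmult_le_compat_l; nra).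
    assert (k * (ph^2 * Qx) = k * - (ph * phx * Q))
      by (replace (ph^2 * Qx) with (ph * (ph * Qx)) by ring; rewrite Ex; ring).
    assert (p * (ph^2 * Qx) = p * - (ph * phx * Q))
      by (replace (ph^2 * Qx) with (ph * (ph * Qx)) by ring; rewrite Ex; ring).
    assert (q * (ph^2 * Qy) = q * - (ph * phy * Q))
      by (replace (ph^2 * Qy) with (ph * (ph * Qy)) by ring; rewrite Ey; ring).
    nra. }
  assert (S2 : ph^2 * (Qxx + Qyy) + ph * Q * (phxx + phyy) - 2 * Q * (phx^2 + phy^2) <= 0).
  { assert (ph * ((phxx * Q + 2 * phx * Qx + ph * Qxx) + (phyy * Q + 2 * phy * Qy + ph * Qyy))
            <= 0) by nra.
    assert (phx * (ph * Qx) = phx * (- phx * Q)) by (rewrite Ex; ring).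
    assert (phy * (ph * Qy) = phy * (- phy * Q)) by (rewrite Ey; ring).
    nra. }
  nra.
Qed.

Lemma quadratic_self_bound G Y : 0 <= G ->
  G^2 / 2 - 81 * G + Y <= 0 -> Y^2 <= G^2 * (256 * G + 576) -> G <= 2000.
Proof.
  intros HG H0 HY.
  destruct (Rle_or_lt G 2000) as [Hle | Hgt]; [exact Hle | exfalso].
  assert (0 <= G^2 / 2 - 81 * G) by nra.
  assert ((G / 2 - 81)^2 * G^2 <= (256 * G + 576) * G^2) by nra.
  assert ((G / 2 - 81)^2 <= 256 * G + 576) by (apply (Rmult_le_reg_r (G^2)); nra).
  nra.
Qed.

Lemma weighted_max_bound_normalized b ph phx phy phxx phyy p q px qy :
  0 < b <= 1 -> 0 < ph <= 1 ->
  phx^2 <= 16 * ph -> phy^2 <= 16 * ph -> -4 <= phxx -> -4 <= phyy ->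
  px + qy = - (p^2 + q^2 + 3 * b * p) ->
  ph^2 * (px + qy)^2 + ph * (p^2 + q^2) * ((2 * p + 3 * b) * phx + 2 * q * phy)
    + ph * (p^2 + q^2) * (phxx + phyy) <= 2 * (p^2 + q^2) * (phx^2 + phy^2) ->
  ph * (p^2 + q^2) <= 2000.
Proof.
  intros Hb Hph Hx Hy Hxx Hyy HE Hmax.
  set (Q := p^2 + q^2) in *. set (G := ph * Q).
  set (Y := ph * Q * ((2 * p + 3 * b) * phx + 2 * q * phy)) in *.
  assert (HQ : 0 <= Q) by (unfold Q; nra).
  assert (HG : 0 <= G) by (unfold G; nra).
  apply (quadratic_self_bound G Y HG).
  - assert (T1 : ph^2 * (px + qy)^2 >= G^2 / 2 - 9 * G).
    { rewrite HE. replace ((- (Q + 3 * b * p))^2) with ((Q + 3 * b * p)^2) by ring.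
      assert (ph^2 * (Q + 3 * b * p)^2 + ph^2 * (3 * b * p)^2 >= ph^2 * Q^2 / 2).
      { assert (0 <= ph^2 * (Q + 2 * (3 * b * p))^2) by (apply Rmult_le_pos; apply pow2_ge_0).
        lra. }
      assert (p^2 <= Q) by (unfold Q; nra).
      assert (b^2 <= 1) by nra. assert (ph^2 <= ph) by nra.
      assert (ph^2 * b^2 <= ph) by nra.
      assert (ph^2 * b^2 * p^2 <= ph * Q) by (apply Rmult_le_compat; nra).
      unfold G. nra. }
    assert (T2 : ph * Q * (phxx + phyy) >= - 8 * G) by (unfold G in *; nra).
    assert (T3 : 2 * Q * (phx^2 + phy^2) <= 64 * G) by (unfold G in *; nra).
    lra.
  - unfold Y. set (u := 2 * p + 3 * b).
    assert (CS : (u * phx + 2 * q * phy)^2 <= (u^2 + 4 * q^2) * (phx^2 + phy^2))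
      by (pose proof (pow2_ge_0 (u * phy - 2 * q * phx)); nra).
    assert (u^2 <= 8 * p^2 + 18) by (unfold u; pose proof (pow2_ge_0 (2 * p - 3 * b)); nra).
    assert ((u^2 + 4 * q^2) * (phx^2 + phy^2) <= (8 * Q + 18) * (32 * ph))
      by (apply Rmult_le_compat; try nra; unfold Q; nra).
    assert ((8 * Q + 18) * (32 * ph) <= 256 * G + 576) by (unfold G; nra).
    replace ((ph * Q * (u * phx + 2 * q * phy))^2) with (G^2 * (u * phx + 2 * q * phy)^2)
      by (unfold G; ring).
    apply Rmult_le_compat_l; [nra | lra].
Qed.

Lemma weighted_max_bound_scaled r a ph phx phy phxx phyy p q px qy :
  0 < r <= a -> 0 < ph <= 1 ->
  r^2 * phx^2 <= 16 * ph -> r^2 * phy^2 <= 16 * ph ->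
  -4 <= r^2 * phxx -> -4 <= r^2 * phyy ->
  px + qy = - (p^2 + q^2 + 3 / a * p) ->
  ph^2 * (px + qy)^2 + ph * (p^2 + q^2) * ((2 * p + 3 / a) * phx + 2 * q * phy)
    + ph * (p^2 + q^2) * (phxx + phyy) <= 2 * (p^2 + q^2) * (phx^2 + phy^2) ->
  r^2 * (ph * (p^2 + q^2)) <= 2000.
Proof.
  intros Hr Hph Hx Hy Hxx Hyy HE Hmax.
  assert (Hr4 : 0 < r^4) by (apply pow_lt; lra).
  replace (r^2 * (ph * (p^2 + q^2))) with (ph * ((r * p)^2 + (r * q)^2)) by ring.
  apply (weighted_max_bound_normalized (r / a) ph (r * phx) (r * phy) (r^2 * phxx) (r^2 * phyy)
           (r * p) (r * q) (r^2 * px) (r^2 * qy));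
    [| exact Hph | nra | nra | exact Hxx | exact Hyy | |].
  - split; [apply Rdiv_lt_0_compat; lra |].
    apply (Rmult_le_reg_r a); [lra |]. field_simplify; lra.
  - replace (r^2 * px + r^2 * qy) with (r^2 * (px + qy)) by ring. rewrite HE. field. lra.
  - match goal with |- ?L <= ?R =>
      replace L with (r^4 * (ph^2 * (px + qy)^2
        + ph * (p^2 + q^2) * ((2 * p + 3 / a) * phx + 2 * q * phy)
        + ph * (p^2 + q^2) * (phxx + phyy))) by (field; lra);
      replace R with (r^4 * (2 * (p^2 + q^2) * (phx^2 + phy^2))) by ring end.
    apply Rmult_le_compat_l; [lra | exact Hmax].
Qed.

(* Bochner's formula for L = Δ + (3/a)∂_x and u = log f: LQ = 2|∇²u|^2 - 2∇u·∇Q + 6 u_x^2/a^2,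
   the last term coming from the x-derivative of the coefficient 3/x. *)
Lemma grad_log_sq_bochner a F F1 F2 F11 F12 F22 F111 F211 F122 F222 :
  a <> 0 -> F <> 0 ->
  F11 + F22 + 3 / a * F1 = 0 ->
  F111 + F122 - 3 / a ^ 2 * F1 + 3 / a * F11 = 0 ->
  F211 + F222 + 3 / a * F12 = 0 ->
  let Qx := grad_log_sq_jet (Jet F F1 F11) (Jet F1 F11 F111) (Jet F2 F12 F211) in
  let Qy := grad_log_sq_jet (Jet F F2 F22) (Jet F1 F12 F122) (Jet F2 F22 F222) in
  let p := F1 / F in let q := F2 / F in
  let px := F11 / F - p ^ 2 in let py := F12 / F - p * q in let qy := F22 / F - q ^ 2 in
  jet2 Qx + jet2 Qy + 3 / a * jet1 Qx
  = 2 * (px ^ 2 + 2 * py ^ 2 + qy ^ 2) - 2 * (p * jet1 Qx + q * jet1 Qy) + 6 * p ^ 2 / a ^ 2.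
Proof.
  intros Ha HF E0 Ex Ey Qx Qy p q px py qy.
  assert (F22 = - F11 - 3 / a * F1) by lra.
  assert (F122 = - F111 + 3 / a ^ 2 * F1 - 3 / a * F11) by lra.
  assert (F222 = - F211 - 3 / a * F12) by lra.
  subst Qx Qy p q px py qy. unfold grad_log_sq_jet, jet_mul, jet_add, jet_inv. cbn.
  subst F22 F122 F222. field. auto.
Qed.

Lemma grad_log_sq_weighted_max_bound r a Wx Wy F F1 F2 F11 F12 F22 F111 F211 F122 F222 :
  0 < r <= a -> 0 < F -> 0 < jet0 Wx -> jet0 Wy = jet0 Wx ->
  weight_bounds r Wx -> weight_bounds r Wy ->
  F11 + F22 + 3 / a * F1 = 0 ->
  F111 + F122 - 3 / a ^ 2 * F1 + 3 / a * F11 = 0 ->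
  F211 + F222 + 3 / a * F12 = 0 ->
  let Qx := grad_log_sq_jet (Jet F F1 F11) (Jet F1 F11 F111) (Jet F2 F12 F211) in
  let Qy := grad_log_sq_jet (Jet F F2 F22) (Jet F1 F12 F122) (Jet F2 F22 F222) in
  jet1 (jet_mul Wx Qx) = 0 -> jet1 (jet_mul Wy Qy) = 0 ->
  jet2 (jet_mul Wx Qx) + jet2 (jet_mul Wy Qy) <= 0 ->
  r^2 * (jet0 Wx * grad_log_sq F F1 F2) <= 2000.
Proof.
  intros Hr HF HW0 HWy [Wx0 [Wx1 Wx2]] [_ [Wy1 Wy2]] E0 Ex Ey Qx Qy Gx Gy Glap.
  pose proof (grad_log_sq_bochner a F F1 F2 F11 F12 F22 F111 F211 F122 F222
    ltac:(lra) ltac:(lra) E0 Ex Ey) as Hboch. cbv zeta in Hboch. fold Qx Qy in Hboch.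
  assert (HQ : grad_log_sq F F1 F2 = (F1 / F)^2 + (F2 / F)^2)
    by (unfold grad_log_sq; field; lra).
  assert (HQx : jet0 Qx = grad_log_sq F F1 F2) by reflexivity.
  assert (HQy : jet0 Qy = grad_log_sq F F1 F2) by reflexivity.
  rewrite HQ. rewrite HWy in Wy1.
  apply (weighted_max_bound_scaled r a (jet0 Wx) (jet1 Wx) (jet1 Wy) (jet2 Wx) (jet2 Wy)
           (F1 / F) (F2 / F) (F11 / F - (F1 / F)^2) (F22 / F - (F2 / F)^2));
    [exact Hr | lra | exact Wx1 | exact Wy1 | exact Wx2 | exact Wy2 | |].
  - replace F22 with (- F11 - 3 / a * F1) by lra. field. lra.
  - rewrite <- HQ.
    apply (weighted_max_inequality (3 / a) (jet0 Wx) (jet1 Wx) (jet1 Wy) (jet2 Wx) (jet2 Wy)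
             (F1 / F) (F2 / F) _ _ _ (jet1 Qx) (jet1 Qy) (jet2 Qx) (jet2 Qy));
      [exact HW0 | exact HQ | | | |].
    + rewrite Hboch.
      assert (0 <= (F12 / F - F1 / F * (F2 / F))^2) by apply pow2_ge_0.
      assert (0 <= 6 * (F1 / F)^2 / a^2)
        by (apply Rmult_le_pos; [nra | apply Rlt_le, Rinv_0_lt_compat, pow_lt; lra]).
      lra.
    + unfold jet_mul in Gx. cbn [jet0 jet1 jet2] in Gx. rewrite HQx in Gx. lra.
    + unfold jet_mul in Gy. cbn [jet0 jet1 jet2] in Gy. rewrite HQy, HWy in Gy. lra.
    + unfold jet_mul in Glap. cbn [jet0 jet1 jet2] in Glap. rewrite HQx, HQy, HWy in Glap. lra.
Qed.

Lemma continuous2_at_continuity_2d_pt g x y : continuous2_at g x y -> continuity_2d_pt g x y.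
Proof.
  intros H eps. destruct (H eps (cond_pos eps)) as [d [Hd Hd']].
  exists (mkposreal d Hd). intros u v Hu Hv. exact (Hd' u v Hu Hv).
Qed.

Lemma continuity_2d_pt_line_x F x y : continuity_2d_pt F x y -> continuity_pt (fun t => F t y) x.
Proof.
  intros H eps Heps. destruct (H (mkposreal eps Heps)) as [d Hd].
  exists d. split; [apply cond_pos |]. intros t [_ Ht].
  apply Hd; [exact Ht | rewrite Rminus_diag, Rabs_R0; apply cond_pos].
Qed.

Lemma continuity_2d_rectangle_max F a1 b1 a2 b2 : a1 <= b1 -> a2 <= b2 ->
  (forall x y, a1 <= x <= b1 -> continuity_2d_pt F x y) ->
  exists xm ym, a1 <= xm <= b1 /\ a2 <= ym <= b2 /\
    forall x y, a1 <= x <= b1 -> a2 <= y <= b2 -> F x y <= F xm ym.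
Proof.
  intros H1 H2 Hc.
  (* [m y] maximizes [F _ y]; the function [y |-> F (m y) y] is continuous by uniform continuity. *)
  assert (Hm : forall y, exists m, a1 <= m <= b1 /\ forall t, a1 <= t <= b1 -> F t y <= F m y).
  { intros y. destruct (continuity_ab_maj (fun t => F t y) a1 b1 H1) as [m [Hm1 Hm2]].
    - intros c Hcc. apply continuity_2d_pt_line_x, Hc, Hcc.
    - exists m. split; [exact Hm2 | exact Hm1]. }
  destruct (choice _ Hm) as [m Hmm].
  destruct (continuity_ab_maj (fun y => F (m y) y) a2 b2 H2) as [ym [Hym Hym2]].
  - intros c Hcc eps Heps.
    destruct (uniform_continuity_2d F a1 b1 (a2 - 1) (b2 + 1)
      (fun x y Hx _ => Hc x y Hx) (mkposreal eps Heps)) as [d Hd].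
    exists (Rmin d 1). split; [apply Rmin_pos; [apply cond_pos | lra] |].
    intros y [_ Hy]. simpl in Hy. unfold R_dist in Hy.
    pose proof (Rmin_l d 1). pose proof (Rmin_r d 1). apply Rabs_def2 in Hy.
    destruct (Hmm y) as [My1 My2], (Hmm c) as [Mc1 Mc2].
    assert (E1 : Rabs (F (m c) y - F (m c) c) < eps).
    { apply Hd; try lra. rewrite Rminus_diag, Rabs_R0. apply cond_pos. apply Rabs_def1; lra. }
    assert (E2 : Rabs (F (m y) c - F (m y) y) < eps).
    { apply Hd; try lra. rewrite Rminus_diag, Rabs_R0. apply cond_pos. apply Rabs_def1; lra. }
    pose proof (My2 (m c) Mc1). pose proof (Mc2 (m y) My1).
    apply Rabs_def2 in E1, E2. simpl. unfold R_dist. apply Rabs_def1; lra.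
  - exists (m ym), ym. destruct (Hmm ym) as [M1 _].
    split; [exact M1 | split; [exact Hym2 |]].
    intros x y Hx Hy. destruct (Hmm y) as [_ N2].
    specialize (Hym y Hy). specialize (N2 x Hx). simpl in Hym. lra.
Qed.

Lemma clairaut_half_plane (g gx gy gxy gyx : R -> R -> R) x y : 0 < x ->
  (forall u v, 0 < u -> partial_x g u v (gx u v)) ->
  (forall u v, 0 < u -> partial_y g u v (gy u v)) ->
  (forall u v, 0 < u -> partial_y gx u v (gxy u v)) ->
  (forall u v, 0 < u -> partial_x gy u v (gyx u v)) ->
  continuity_2d_pt gxy x y -> continuity_2d_pt gyx x y -> gxy x y = gyx x y.
Proof.
  intros Hx Hgx Hgy Hgxy Hgyx Cxy Cyx.
  assert (Hnear : forall u, Rabs (u - x) < x -> 0 < u) by (intros u Hu; apply Rabs_def2 in Hu; lra).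
  assert (A1 : forall u v, 0 < u -> is_derive (fun z => Derive (fun t => g z t) v) u (gyx u v)).
  { intros u v Hu. apply (is_derive_ext_loc (fun z => gy z v)).
    - exists (mkposreal u Hu). intros z Hz. change (Rabs (z - u) < u) in Hz.
      symmetry. apply is_derive_unique, is_derive_Reals, Hgy.
      apply Rabs_def2 in Hz. lra.
    - apply is_derive_Reals, Hgyx, Hu. }
  assert (A2 : forall u v, 0 < u -> is_derive (fun z => Derive (fun t => g t z) u) v (gxy u v)).
  { intros u v Hu. apply (is_derive_ext (fun z => gx u z)).
    - intros z. symmetry. apply is_derive_unique, is_derive_Reals, Hgx, Hu.
    - apply is_derive_Reals, Hgxy, Hu. }
  rewrite <- (is_derive_unique _ _ _ (A1 x y Hx)), <- (is_derive_unique _ _ _ (A2 x y Hx)).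
  symmetry. apply Schwarz.
  - exists (mkposreal x Hx). intros u v Hu _. pose proof (Hnear u Hu) as Hu0.
    repeat split; eexists.
    + apply is_derive_Reals, Hgx, Hu0.
    + apply is_derive_Reals, Hgy, Hu0.
    + apply A1, Hu0.
    + apply A2, Hu0.
  - apply (continuity_2d_pt_ext_loc gyx); [| exact Cyx].
    exists (mkposreal x Hx). intros u v Hu _.
    symmetry. apply is_derive_unique, A1, (Hnear u Hu).
  - apply (continuity_2d_pt_ext_loc gxy); [| exact Cxy].
    exists (mkposreal x Hx). intros u v Hu _.
    symmetry. apply is_derive_unique, A2, (Hnear u Hu).
Qed.

Definition derivation_closed (U : R -> R -> Prop) (S : (R -> R -> R) -> Prop)
  (DX DY : (R -> R -> R) -> R -> R -> R) : Prop :=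
  forall g, S g -> (forall x y, U x y -> continuous2_at g x y) /\ S (DX g) /\ S (DY g) /\
    forall x y, U x y -> partial_x g x y (DX g x y) /\ partial_y g x y (DY g x y).

Lemma smooth_on_derivations U f : smooth_on U f ->
  exists S DX DY, S f /\ derivation_closed U S DX DY.
Proof.
  intros [S [Hf HS]].
  assert (H : forall g, exists D : (R -> R -> R) * (R -> R -> R), S g ->
     S (fst D) /\ S (snd D) /\
     forall x y, U x y -> partial_x g x y (fst D x y) /\ partial_y g x y (snd D x y)).
  { intros g. destruct (classic (S g)) as [Hg | Hg].
    - destruct (HS g Hg) as [_ [gx [gy Hd]]]. exists (gx, gy). intros _. exact Hd.
    - exists (g, g). intros Hg'. contradiction. }
  destruct (choice _ H) as [D HD].
  exists S, (fun g => fst (D g)), (fun g => snd (D g)). split; [exact Hf |].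
  intros g Hg. split; [exact (proj1 (HS g Hg)) | exact (HD g Hg)].
Qed.

Section DerivationClosedClass.
Variables (S : (R -> R -> R) -> Prop) (DX DY : (R -> R -> R) -> R -> R -> R).
Hypothesis HS : derivation_closed H2 S DX DY.

Lemma DX_spec g x y : S g -> 0 < x -> partial_x g x y (DX g x y).
Proof. intros Hg Hx. exact (proj1 (proj2 (proj2 (proj2 (HS g Hg))) x y Hx)). Qed.

Lemma DY_spec g x y : S g -> 0 < x -> partial_y g x y (DY g x y).
Proof. intros Hg Hx. exact (proj2 (proj2 (proj2 (proj2 (HS g Hg))) x y Hx)). Qed.

Lemma S_DX g : S g -> S (DX g).
Proof. intros Hg. exact (proj1 (proj2 (HS g Hg))). Qed.

Lemma S_DY g : S g -> S (DY g).
Proof. intros Hg. exact (proj1 (proj2 (proj2 (HS g Hg)))). Qed.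

Lemma S_continuity_2d g x y : S g -> 0 < x -> continuity_2d_pt g x y.
Proof. intros Hg Hx. apply continuous2_at_continuity_2d_pt, (proj1 (HS g Hg)), Hx. Qed.

Lemma DX_DY_comm g x y : S g -> 0 < x -> DX (DY g) x y = DY (DX g) x y.
Proof.
  intros Hg Hx. symmetry.
  apply (clairaut_half_plane g (DX g) (DY g)); try exact Hx;
    intros; try apply S_continuity_2d; auto using DX_spec, DY_spec, S_DX, S_DY.
Qed.

Lemma DX_congr g h x y : S g -> S h -> 0 < x ->
  (forall u v, 0 < u -> g u v = h u v) -> DX g x y = DX h x y.
Proof.
  intros Hg Hh Hx E. apply (uniqueness_limite (fun t => h t y) x); [| exact (DX_spec h x y Hh Hx)].
  apply (derivable_pt_lim_ext_loc (fun t => g t y)); [| exact (DX_spec g x y Hg Hx)].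
  exists x. split; [exact Hx |]. intros t Ht. apply Rabs_def2 in Ht. apply E. lra.
Qed.

Lemma DY_congr g h x y : S g -> S h -> 0 < x ->
  (forall v, g x v = h x v) -> DY g x y = DY h x y.
Proof.
  intros Hg Hh Hx E. apply (uniqueness_limite (fun t => h x t) y); [| exact (DY_spec h x y Hh Hx)].
  exact (derivable_pt_lim_ext _ _ _ _ E (DY_spec g x y Hg Hx)).
Qed.

Lemma pde_operator_form g (gx gy gxx gyy : R -> R -> R) : S g ->
  (forall x y, 0 < x ->
     partial_x g x y (gx x y) /\ partial_y g x y (gy x y) /\
     partial_x gx x y (gxx x y) /\ partial_y gy x y (gyy x y) /\
     gxx x y + gyy x y + 3 / x * gx x y = 0) ->
  forall x y, 0 < x -> DX (DX g) x y + DY (DY g) x y + 3 / x * DX g x y = 0.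
Proof.
  intros Hg Hpde x y Hx.
  assert (Ex : forall u v, 0 < u -> gx u v = DX g u v)
    by (intros u v Hu;
        exact (uniqueness_limite _ _ _ _ (proj1 (Hpde u v Hu)) (DX_spec g u v Hg Hu))).
  assert (Ey : forall v, gy x v = DY g x v)
    by (intros v;
        exact (uniqueness_limite _ _ _ _ (proj1 (proj2 (Hpde x v Hx))) (DY_spec g x v Hg Hx))).
  destruct (Hpde x y Hx) as [_ [_ [Hxx [Hyy Heq]]]].
  assert (Exx : gxx x y = DX (DX g) x y).
  { apply (uniqueness_limite (fun t => DX g t y) x); [| exact (DX_spec _ x y (S_DX g Hg) Hx)].
    apply (derivable_pt_lim_ext_loc (fun t => gx t y)); [| exact Hxx].
    exists x. split; [exact Hx |]. intros t Ht. apply Rabs_def2 in Ht. apply Ex. lra. }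
  assert (Eyy : gyy x y = DY (DY g) x y).
  { apply (uniqueness_limite (fun t => DY g x t) y); [| exact (DY_spec _ x y (S_DY g Hg) Hx)].
    exact (derivable_pt_lim_ext _ _ _ _ Ey Hyy). }
  rewrite <- Exx, <- Eyy, <- (Ex x y Hx). exact Heq.
Qed.

Definition x_jet g x y := Jet (g x y) (DX g x y) (DX (DX g) x y).
Definition y_jet g x y := Jet (g x y) (DY g x y) (DY (DY g) x y).

Lemma has_jet_x_jet g y : S g -> has_jet (fun t => 0 < t) (fun t => x_jet g t y).
Proof. intros Hg t Ht. split; apply DX_spec; auto using S_DX. Qed.

Lemma has_jet_y_jet g x : S g -> 0 < x -> has_jet (fun _ => True) (fun t => y_jet g x t).
Proof. intros Hg Hx t _. split; apply DY_spec; auto using S_DY. Qed.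

Variable f : R -> R -> R.
Hypothesis Sf : S f.
Hypothesis Hpde : forall x y, 0 < x -> DX (DX f) x y + DY (DY f) x y + 3 / x * DX f x y = 0.

Lemma pde_derivative_x x y : 0 < x ->
  DX (DX (DX f)) x y + DY (DX (DY f)) x y - 3 / x ^ 2 * DX f x y + 3 / x * DX (DX f) x y = 0.
Proof.
  intros Hx.
  assert (Hinv : derivable_pt_lim (fun t => 3 / t) x (- 3 / x ^ 2)).
  { eapply derivable_pt_lim_eq_val.
    - exact (derivable_pt_lim_mult (fun _ => 3) (fun t => / t) _ _ _ (derivable_pt_lim_const 3 x)
        (derivable_pt_lim_inv_fun (fun t => t) x 1 (derivable_pt_lim_id x) ltac:(lra))).
    - cbv beta. field. lra. }
  assert (HD := derivable_pt_lim_plus _ _ _ _ _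
    (derivable_pt_lim_plus _ _ _ _ _ (DX_spec (DX (DX f)) x y (S_DX _ (S_DX _ Sf)) Hx)
                                     (DX_spec (DY (DY f)) x y (S_DY _ (S_DY _ Sf)) Hx))
    (derivable_pt_lim_mult _ _ _ _ _ Hinv (DX_spec (DX f) x y (S_DX _ Sf) Hx))).
  assert (HZ : derivable_pt_lim (fun t => DX (DX f) t y + DY (DY f) t y + 3 / t * DX f t y) x 0).
  { apply (derivable_pt_lim_ext_loc (fun _ => 0)); [| apply derivable_pt_lim_const].
    exists x. split; [exact Hx |]. intros t Ht. apply Rabs_def2 in Ht. symmetry. apply Hpde. lra. }
  pose proof (uniqueness_limite _ _ _ _ HD HZ) as H0.
  rewrite (DX_DY_comm (DY f) x y (S_DY _ Sf) Hx) in H0. cbv beta in H0.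
  unfold Rdiv in *. lra.
Qed.

Lemma pde_derivative_y x y : 0 < x ->
  DX (DX (DY f)) x y + DY (DY (DY f)) x y + 3 / x * DX (DY f) x y = 0.
Proof.
  intros Hx.
  assert (HD := derivable_pt_lim_plus _ _ _ _ _
    (derivable_pt_lim_plus _ _ _ _ _ (DY_spec (DX (DX f)) x y (S_DX _ (S_DX _ Sf)) Hx)
                                     (DY_spec (DY (DY f)) x y (S_DY _ (S_DY _ Sf)) Hx))
    (derivable_pt_lim_mult _ _ _ _ _ (derivable_pt_lim_const (3 / x) y)
                                     (DY_spec (DX f) x y (S_DX _ Sf) Hx))).
  assert (HZ : derivable_pt_lim (fun t => DX (DX f) x t + DY (DY f) x t + 3 / x * DX f x t) y 0).
  { apply (derivable_pt_lim_ext (fun _ => 0)); [| apply derivable_pt_lim_const].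
    intros t. symmetry. apply Hpde, Hx. }
  pose proof (uniqueness_limite _ _ _ _ HD HZ) as H0.
  rewrite <- (DX_DY_comm (DX f) x y (S_DX _ Sf) Hx) in H0.
  rewrite (DX_congr (DY (DX f)) (DX (DY f)) x y (S_DY _ (S_DX _ Sf)) (S_DX _ (S_DY _ Sf)) Hx
    (fun u v Hu => eq_sym (DX_DY_comm f u v Sf Hu))) in H0.
  unfold fct_cte in H0. rewrite <- (DX_DY_comm f x y Sf Hx) in H0. lra.
Qed.

Hypothesis Hpos : forall x y, 0 < x -> 0 < f x y.

Definition weighted_grad_log_sq x0 y0 r u v :=
  cutoff ((u - x0) / r) * cutoff ((v - y0) / r) * grad_log_sq (f u v) (DX f u v) (DY f u v).

Lemma weighted_grad_log_sq_continuity x0 y0 r u v : 0 < u ->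
  continuity_2d_pt (weighted_grad_log_sq x0 y0 r) u v.
Proof.
  intros Hu. unfold weighted_grad_log_sq, grad_log_sq, cutoff, Rdiv. simpl.
  assert (Hf : f u v <> 0) by (apply Rgt_not_eq, Hpos, Hu).
  pose proof (S_continuity_2d f u v Sf Hu).
  pose proof (S_continuity_2d (DX f) u v (S_DX f Sf) Hu).
  pose proof (S_continuity_2d (DY f) u v (S_DY f Sf) Hu).
  repeat first [ apply continuity_2d_pt_const | apply continuity_2d_pt_id1
               | apply continuity_2d_pt_id2 | assumption
               | apply continuity_2d_pt_mult | apply continuity_2d_pt_plus
               | apply continuity_2d_pt_minus | apply continuity_2d_pt_opp
               | apply continuity_2d_pt_inv ].
Qed.

Lemma weighted_critical_x x0 y0 r xm ym d : 0 < d -> r <> 0 ->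
  (forall t, Rabs (t - xm) < d ->
     0 < t /\ weighted_grad_log_sq x0 y0 r t ym <= weighted_grad_log_sq x0 y0 r xm ym) ->
  let W := jet_mul (cutoff_jet x0 r xm) (jet_const (cutoff ((ym - y0) / r))) in
  let Q := grad_log_sq_jet (x_jet f xm ym) (x_jet (DX f) xm ym) (x_jet (DY f) xm ym) in
  jet1 (jet_mul W Q) = 0 /\ jet2 (jet_mul W Q) <= 0.
Proof.
  intros Hd Hr Hmax W Q.
  apply (jet_local_max (fun t => 0 < t) (fun t => jet_mul
    (jet_mul (cutoff_jet x0 r t) (jet_const (cutoff ((ym - y0) / r))))
    (grad_log_sq_jet (x_jet f t ym) (x_jet (DX f) t ym) (x_jet (DY f) t ym))) xm d Hd);
    [| exact Hmax].
  apply has_jet_mul; [apply has_jet_mul; [apply has_jet_cutoff, Hr | apply has_jet_const] |].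
  apply has_jet_grad_log_sq; auto using has_jet_x_jet, S_DX, S_DY.
  intros t Ht. apply Rgt_not_eq, Hpos, Ht.
Qed.

Lemma weighted_critical_y x0 y0 r xm ym d : 0 < d -> r <> 0 -> 0 < xm ->
  (forall t, Rabs (t - ym) < d ->
     weighted_grad_log_sq x0 y0 r xm t <= weighted_grad_log_sq x0 y0 r xm ym) ->
  let W := jet_mul (cutoff_jet y0 r ym) (jet_const (cutoff ((xm - x0) / r))) in
  let Q := grad_log_sq_jet (y_jet f xm ym)
             (Jet (DX f xm ym) (DX (DY f) xm ym) (DY (DX (DY f)) xm ym)) (y_jet (DY f) xm ym) in
  jet1 (jet_mul W Q) = 0 /\ jet2 (jet_mul W Q) <= 0.
Proof.
  intros Hd Hr Hxm Hmax W Q.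
  destruct (jet_local_max (fun _ => True) (fun t => jet_mul
    (jet_mul (cutoff_jet y0 r t) (jet_const (cutoff ((xm - x0) / r))))
    (grad_log_sq_jet (y_jet f xm t) (y_jet (DX f) xm t) (y_jet (DY f) xm t))) ym d Hd)
    as [H1 H2].
  - apply has_jet_mul; [apply has_jet_mul; [apply has_jet_cutoff, Hr | apply has_jet_const] |].
    apply has_jet_grad_log_sq; auto using has_jet_y_jet, S_DX, S_DY.
    intros t _. apply Rgt_not_eq, Hpos, Hxm.
  - intros t Ht. split; [exact I |]. specialize (Hmax t Ht).
    unfold weighted_grad_log_sq in Hmax.
    change (cutoff ((t - y0) / r) * cutoff ((xm - x0) / r)
         * grad_log_sq (f xm t) (DX f xm t) (DY f xm t)
      <= cutoff ((ym - y0) / r) * cutoff ((xm - x0) / r)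
         * grad_log_sq (f xm ym) (DX f xm ym) (DY f xm ym)).
    lra.
  - (* the mixed partials of the y-jet of [f_x] are rewritten as those of the x-jet of [f_y] *)
    unfold y_jet in H1, H2. rewrite <- (DX_DY_comm f xm ym Sf Hxm) in H1, H2.
    rewrite (DY_congr (DY (DX f)) (DX (DY f)) xm ym (S_DY _ (S_DX _ Sf)) (S_DX _ (S_DY _ Sf)) Hxm
      (fun v => eq_sym (DX_DY_comm f xm v Sf Hxm))) in H2.
    split; assumption.
Qed.

Lemma weighted_grad_log_sq_interior_max x0 y0 xm ym : 0 < x0 ->
  let r := x0 / 2 in let G := weighted_grad_log_sq x0 y0 r in
  x0 - r <= xm <= x0 + r -> y0 - r <= ym <= y0 + r ->
  (forall x y, x0 - r <= x <= x0 + r -> y0 - r <= y <= y0 + r -> G x y <= G xm ym) ->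
  0 < G xm ym -> r^2 * G xm ym <= 2000.
Proof.
  intros Hx0 r G Hxm Hym Hmax HG.
  assert (Hr : 0 < r) by (unfold r; lra).
  set (s := (xm - x0) / r) in *. set (u := (ym - y0) / r) in *.
  assert (Hs : s^2 <= 1) by exact (cutoff_arg_bounds x0 r xm Hr Hxm).
  assert (Hu : u^2 <= 1) by exact (cutoff_arg_bounds y0 r ym Hr Hym).
  destruct (cutoff_range s Hs) as [[Hcs | Hcs] Hcs1]; [| unfold G, weighted_grad_log_sq in HG;
    fold s u in HG; rewrite <- Hcs in HG; lra].
  destruct (cutoff_range u Hu) as [[Hcu | Hcu] Hcu1]; [| unfold G, weighted_grad_log_sq in HG;
    fold s u in HG; rewrite <- Hcu in HG; lra].
  pose proof (cutoff_interior x0 r xm Hr Hxm Hcs) as Hxi.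
  pose proof (cutoff_interior y0 r ym Hr Hym Hcu) as Hyi.
  assert (Hxm0 : 0 < xm) by (unfold r in *; lra).
  destruct (weighted_critical_x x0 y0 r xm ym (r - Rabs (xm - x0)) ltac:(lra) ltac:(lra))
    as [Gx1 Gx2].
  { intros t Ht. pose proof (interior_neighbourhood x0 r xm Hxi t Ht).
    split; [unfold r in *; lra | apply Hmax; assumption]. }
  destruct (weighted_critical_y x0 y0 r xm ym (r - Rabs (ym - y0)) ltac:(lra) ltac:(lra) Hxm0)
    as [Gy1 Gy2].
  { intros t Ht. pose proof (interior_neighbourhood y0 r ym Hyi t Ht). apply Hmax; assumption. }
  apply (grad_log_sq_weighted_max_bound r xm
    (jet_mul (cutoff_jet x0 r xm) (jet_const (cutoff u)))
    (jet_mul (cutoff_jet y0 r ym) (jet_const (cutoff s)))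
    (f xm ym) (DX f xm ym) (DY f xm ym) (DX (DX f) xm ym) (DX (DY f) xm ym) (DY (DY f) xm ym)
    (DX (DX (DX f)) xm ym) (DX (DX (DY f)) xm ym) (DY (DX (DY f)) xm ym) (DY (DY (DY f)) xm ym));
    try assumption.
  - unfold r in *. lra.
  - exact (Hpos xm ym Hxm0).
  - exact (Rmult_lt_0_compat _ _ Hcs Hcu).
  - apply Rmult_comm.
  - apply weight_bounds_cutoff; [lra | exact Hs | lra].
  - apply weight_bounds_cutoff; [lra | exact Hu | lra].
  - exact (Hpde xm ym Hxm0).
  - exact (pde_derivative_x xm ym Hxm0).
  - exact (pde_derivative_y xm ym Hxm0).
  - unfold x_jet, y_jet in Gx2, Gy2. fold s u in Gx2, Gy2. lra.
Qed.

Lemma grad_log_sq_bound x0 y0 : 0 < x0 ->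
  x0^2 * grad_log_sq (f x0 y0) (DX f x0 y0) (DY f x0 y0) <= 8000.
Proof.
  intros Hx0. set (r := x0 / 2). set (G := weighted_grad_log_sq x0 y0 r).
  destruct (continuity_2d_rectangle_max G (x0 - r) (x0 + r) (y0 - r) (y0 + r))
    as [xm [ym [Hxm [Hym Hmax]]]]; try (unfold r; lra).
  { intros x y Hx. apply weighted_grad_log_sq_continuity. unfold r in Hx. lra. }
  assert (HG0 : G x0 y0 = grad_log_sq (f x0 y0) (DX f x0 y0) (DY f x0 y0)).
  { unfold G, weighted_grad_log_sq. rewrite !Rminus_diag, !Rdiv_0_l. unfold cutoff. ring. }
  assert (HGm : G x0 y0 <= G xm ym) by (apply Hmax; unfold r; lra).
  assert (Hr2 : x0^2 = 4 * r^2) by (unfold r; field).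
  pose proof (grad_log_sq_nonneg (f x0 y0) (DX f x0 y0) (DY f x0 y0)).
  destruct (Rle_or_lt (G xm ym) 0) as [Hle | Hgt].
  - assert (0 < x0^2) by (apply pow_lt; lra). nra.
  - pose proof (weighted_grad_log_sq_interior_max x0 y0 xm ym Hx0 Hxm Hym Hmax Hgt) as Hint.
    fold r G in Hint.
    assert (0 < r^2) by (apply pow_lt; unfold r; lra).
    assert (r^2 * G x0 y0 <= r^2 * G xm ym) by (apply Rmult_le_compat_l; lra).
    rewrite Hr2, <- HG0. lra.
Qed.

End DerivationClosedClass.

Lemma sqrt_bound_of_sq x Q : 0 <= x -> 0 <= Q -> x^2 * Q <= 8000 -> x * sqrt Q < 90.
Proof.
  intros Hx HQ H. pose proof (sqrt_sqrt Q HQ). pose proof (sqrt_pos Q).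
  assert ((x * sqrt Q)^2 <= 8000)
    by (replace ((x * sqrt Q)^2) with (x^2 * (sqrt Q * sqrt Q)) by ring; nra).
  nra.
Qed.

Theorem proposition4p3 :
  exists c : R, forall f : R -> R -> R,
    smooth_on H2 f ->
    (forall x y, H2 x y -> 0 < f x y) ->
    (exists fx fy fxx fyy : R -> R -> R,
       forall x y, H2 x y ->
         partial_x f x y (fx x y) /\ partial_y f x y (fy x y) /\
         partial_x fx x y (fxx x y) /\ partial_y fy x y (fyy x y) /\
         fxx x y + fyy x y + 3 / x * fx x y = 0) ->
    forall x y px py, H2 x y ->
      partial_x f x y px -> partial_y f x y py ->
      x * sqrt ((px / f x y) ^ 2 + (py / f x y) ^ 2) < c.
Proof.
  exists 90. intros f Hsmooth Hpos [fx [fy [fxx [fyy Hpde]]]] x y px py Hx Hpx Hpy.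
  destruct (smooth_on_derivations H2 f Hsmooth) as [S [DX [DY [Sf HS]]]].
  pose proof (pde_operator_form S DX DY HS f fx fy fxx fyy Sf Hpde) as Hop.
  pose proof (grad_log_sq_bound S DX DY HS f Sf Hop Hpos x y Hx) as Hbound.
  rewrite (uniqueness_limite _ _ _ _ Hpx (DX_spec S DX DY HS f x y Sf Hx)),
          (uniqueness_limite _ _ _ _ Hpy (DY_spec S DX DY HS f x y Sf Hx)).
  apply sqrt_bound_of_sq; [unfold H2 in Hx; lra | apply Rplus_le_le_0_compat; apply pow2_ge_0 |].
  replace ((DX f x y / f x y) ^ 2 + (DY f x y / f x y) ^ 2)
    with (grad_log_sq (f x y) (DX f x y) (DY f x y)); [exact Hbound |].
  unfold grad_log_sq. field. apply Rgt_not_eq, Hpos, Hx.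
Qed.
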